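(* Let $n\ge2$, $N\ge1$, $L>0$, $h=L/N$. There is a constant $C>0$ independent of $h$ such that the following holds. Let $\Phi=(\Phi_{ij})_{i,j=1}^{n-1}$ be a matrix of edge-centered grid functions such that at every edge point $\ell+\frac12$ the matrix $(\Phi_{ij,\ell+\frac12})$ is symmetric positive definite, and let $\lambda_{\min}>0$ be the minimum over $\ell=1,\dots,N$ of the eigenvalues of $(\Phi_{ij,\ell+\frac12})_{i,j}$. Let $\phi\in\mathring{\mathcal C}^{n-1}_{\rm per}$ satisfy $\|\phi\|_{L^\infty}:=\max_{i,\ell}|\phi_{i,\ell}|\le M$. Then $$\|\mathcal L_\Phi^{-1}\phi\|_{L^\infty}\le\frac{CM}{\lambda_{\min}}\,h^{-\frac12}(n-1)^{\frac12}.$$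
   Context: Grid on the torus $[0,L]$ with $N$ intervals, $h=L/N$: cell-centered grid functions are $N$-periodic sequences $(f_\ell)$, edge-centered ones $N$-periodic sequences $(f_{\ell+\frac12})$. $(d_h\phi)_\ell=(\phi_{\ell+\frac12}-\phi_{\ell-\frac12})/h$, $(D_hf)_{\ell+\frac12}=(f_{\ell+1}-f_\ell)/h$. $\mathring{\mathcal C}^{n-1}_{\rm per}$ denotes $(n-1)$-tuples $f=(f_1,\dots,f_{n-1})$ of cell-centered grid functions with $\sum_{\ell=1}^Nf_{i,\ell}=0$ for each $i$. The operator $\mathcal L_\Phi:\mathring{\mathcal C}^{n-1}_{\rm per}\to\mathring{\mathcal C}^{n-1}_{\rm per}$ is $(\mathcal L_\Phi f)_i=-\sum_{j=1}^{n-1}d_h(\Phi_{ij}D_hf_j)$ (products pointwise on edges); it is invertible on $\mathring{\mathcal C}^{n-1}_{\rm per}$, and $\mathcal L_\Phi^{-1}\phi$ denotes the unique $f\in\mathring{\mathcal C}^{n-1}_{\rm per}$ with $\mathcal L_\Phi f=\phi$; $\|f\|_{L^\infty}=\max_{i,\ell}|f_{i,\ell}|$. *)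

From mathcomp Require Import all_boot all_order all_algebra reals.
Set Implicit Arguments. Unset Strict Implicit. Unset Printing Implicit Defensive.
Import Order.TTheory GRing.Theory Num.Theory.
Local Open Scope ring_scope.

Section Grid.
Variable R : realType.

(* Periodic grid with N cells, indices 0..N-1 (paper: 1..N), wrapping via
   ordS (l+1 mod N) and ord_pred (l-1 mod N).
   A cell-centered grid function is  'I_N -> R  (value f_l);
   an edge-centered grid function is 'I_N -> R, where index l stands for the
   edge point l+1/2.  An (n-1)-tuple of cell functions is 'I_k -> 'I_N -> R. *)

Definition Dh (N : nat) (h : R) (f : 'I_N -> R) : 'I_N -> R :=
  fun l => (f (ordS l) - f l) / h.

Definition dh (N : nat) (h : R) (p : 'I_N -> R) : 'I_N -> R :=
  fun l => (p l - p (ord_pred l)) / h.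

Definition LPhi (k N : nat) (h : R) (Phi : 'I_N -> 'M[R]_k)
    (f : 'I_k -> 'I_N -> R) : 'I_k -> 'I_N -> R :=
  fun i => fun l => - \sum_(j < k) dh h (fun e => Phi e i j * Dh h (f j) e) l.

Definition mean_zero (k N : nat) (f : 'I_k -> 'I_N -> R) : Prop :=
  forall i, \sum_(l < N) f i l = 0.

Definition Linf (k N : nat) (f : 'I_k -> 'I_N -> R) : R :=
  \big[Num.max/0]_(i < k) \big[Num.max/0]_(l < N) `|f i l|.

Definition sym_posdef (k : nat) (A : 'M[R]_k) : Prop :=
  A^T = A /\ forall v : 'cV[R]_k, v != 0 -> 0 < (v^T *m A *m v) 0 0.

Definition is_min_eigenvalue (k N : nat) (Phi : 'I_N -> 'M[R]_k) (lam : R) : Prop :=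
  (exists l : 'I_N, eigenvalue (Phi l) lam) /\
  (forall (l : 'I_N) (mu : R), eigenvalue (Phi l) mu -> lam <= mu).

End Grid.

From mathcomp Require Import all_boot all_order all_algebra reals.
From mathcomp Require Import ring complex.
Set Implicit Arguments. Unset Strict Implicit. Unset Printing Implicit Defensive.
Import Order.TTheory GRing.Theory Num.Theory.
Local Open Scope ring_scope.

(* Pairing L_Phi f = phi with f and summing by parts turns <f, phi> into the
   energy sum_l (D_h f)_l^T Phi_l (D_h f)_l, which is at least
   lam * sum_{i,l} (D_h f_i)_l^2 by the Rayleigh bound for each symmetric Phi_l,
   while <f, phi> <= (n-1) N ||f||_oo M.  A mean-zero periodic grid function is
   bounded by its total variation, so by Cauchy-Schwarz
   ||f_i||_oo^2 <= L h sum_l (D_h f_i)_l^2.  Combining, with h N = L,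
   lam ||f||_oo^2 <= L^2 (n-1) M ||f||_oo, i.e. ||f||_oo <= L^2 (n-1) M / lam,
   which implies the claim because sqrt (L / h) = sqrt N >= 1. *)

Section Rayleigh.
Local Open Scope sesquilinear_scope.

Lemma hermitian_rayleigh (C : numClosedFieldType) k (A : 'M[C]_k) (lam : C) :
  A \is hermsymmx ->
  (forall mu, mu \is Num.real -> eigenvalue A mu -> lam <= mu) ->
  forall u : 'rV[C]_k, lam * (u *m u^t* ) 0 0 <= (u *m A *m u^t* ) 0 0.
Proof.
move=> Aherm lam_le u.
have /orthomx_spectralP := hermitian_normalmx Aherm.
have Punitary := spectral_unitarymx A.
have d_real := hermitian_spectral_diag_real Aherm.
set P := spectralmx A; set d := spectral_diag A.
rewrite invmx_unitary // => A_diag.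
have PPt : P *m P^t* = 1%:M by apply/unitarymxP.
have lam_le_d j : lam <= d 0 j.
  apply: lam_le; first exact: mxOverP d_real 0 j.
  apply/eigenvalueP; exists (row j P).
    by rewrite A_diag -!row_mul !mulmxA PPt mul1mx row_mul row_diag_mx -scalemxAl -rowE.
  apply: contraTneq isT => Pj0.
  have := congr1 (fun X => X *m P^t*) Pj0; rewrite -row_mul PPt mul0mx row1.
  by move=> /rowP/(_ j)/eqP; rewrite !mxE eqxx /= eqxx oner_eq0.
set w := u *m P^t*.
have wt : w^t* = P *m u^t* by rewrite /w trmx_mul map_mxM trmxCK.
have -> : u *m A *m u^t* = w *m diag_mx d *m w^t* by rewrite wt A_diag /w !mulmxA.
have -> : u *m u^t* = w *m w^t* by rewrite wt /w !mulmxA mulmxKtV.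
rewrite !mxE mulr_sumr; apply: ler_sum => j _.
rewrite mul_mx_diag !mxE mulrAC (mulrC _ (d 0 j)).
by apply: ler_wpM2r; [exact: mul_conjC_ge0 | exact: lam_le_d].
Qed.

(* MathComp's spectral theorem lives over an algebraically closed field,
   hence the detour through R[i]. *)
Lemma symmetric_rayleigh (R : rcfType) k (A : 'M[R]_k) (lam : R) :
  A^T = A -> (forall mu, eigenvalue A mu -> lam <= mu) ->
  forall v : 'rV[R]_k, lam * (v *m v^T) 0 0 <= (v *m A *m v^T) 0 0.
Proof.
move=> Asym lam_le v.
pose toC := real_complex R.
have toC_trC m n (B : 'M[R]_(m, n)) : (map_mx toC B)^t* = map_mx toC B^T.
  by apply/matrixP => i j; rewrite !mxE conj_Creal // complex_real.
have Ac_herm : map_mx toC A \is hermsymmx.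
  apply: realsym_hermsym; last by apply/mxOverP => i j; rewrite mxE complex_real.
  by rewrite qualifE expr0 scale1r; apply/eqP/matrixP => i j; rewrite !mxE -{1}Asym mxE.
rewrite -lecR rmorphM /= -/toC.
have -> : toC ((v *m v^T) 0 0) = (map_mx toC v *m (map_mx toC v)^t* ) 0 0.
  by rewrite toC_trC -map_mxM [RHS]mxE.
have -> : toC ((v *m A *m v^T) 0 0) =
    (map_mx toC v *m map_mx toC A *m (map_mx toC v)^t* ) 0 0.
  by rewrite toC_trC -!map_mxM [RHS]mxE.
apply: hermitian_rayleigh Ac_herm _ _ => mu mu_real.
rewrite -(RRe_real mu_real) lecR => Amu; apply: lam_le.
by move: Amu; rewrite !eigenvalue_root_char -map_char_poly fmorph_root.
Qed.

End Rayleigh.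

Lemma rayleigh_sum (R : rcfType) k (A : 'M[R]_k) (lam : R) (a : 'I_k -> R) :
  A^T = A -> (forall mu, eigenvalue A mu -> lam <= mu) ->
  lam * \sum_i a i ^+ 2 <= \sum_i \sum_j A i j * a j * a i.
Proof.
move=> Asym lam_le; have := symmetric_rayleigh Asym lam_le (\row_i a i).
rewrite !mxE (eq_bigr (fun i => a i ^+ 2)) => [|i _]; last by rewrite !mxE expr2.
congr (_ <= _); apply: eq_bigr => i _; rewrite !mxE mulr_suml.
by apply: eq_bigr => j _; rewrite !mxE -{1}Asym mxE (mulrC (a j)).
Qed.

Lemma ler_dist_variation (R : numDomainType) (b : nat -> R) n q r :
  (q <= r <= n)%N -> `|b r - b q| <= \sum_(m < n) `|b m.+1 - b m|.
Proof.
case/andP => qr rn; rewrite -(telescope_sumr _ qr).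
rewrite -(big_mkord xpredT (fun m => `|b m.+1 - b m|)).
apply: le_trans (ler_norm_sum _ _ _) _.
rewrite (@big_cat_nat _ _ _ r 0 n) //= (@big_cat_nat _ _ _ q 0 r) //=.
by rewrite -addrA addrCA lerDl addr_ge0 // sumr_ge0.
Qed.

Lemma norm_le_variation (R : numDomainType) N (a : 'I_N -> R) :
  \sum_l a l = 0 -> forall p, `|a p| <= \sum_l `|a (ordS l) - a l|.
Proof.
case: N a => [a _ []//|N] a a0 p.
pose b m := a (inZp m).
have bE (l : 'I_N.+1) : b l = a l by congr a; apply: val_inj; rewrite /= modn_small.
have variation_nat : \sum_l `|a (ordS l) - a l| = \sum_(m < N.+1) `|b m.+1 - b m|.
  by apply: eq_bigr => l _; rewrite bE; congr (`|a _ - _|); exact: val_inj.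
have dist_le q : `|a p - a q| <= \sum_l `|a (ordS l) - a l|.
  rewrite variation_nat -!bE; have [qp|pq] := leqP q p.
    by apply: ler_dist_variation; rewrite qp ltnW.
  by rewrite distrC; apply: ler_dist_variation; rewrite ltnW //= ltnW.
have sum_dist : a p *+ N.+1 = \sum_q (a p - a q).
  by rewrite sumrB a0 subr0 sumr_const card_ord.
rewrite -(ler_pMn2r (ltn0Sn N)) -normrMn sum_dist.
apply: le_trans (ler_norm_sum _ _ _) _.
by apply: le_trans (ler_sum _ (fun q _ => dist_le q)) _; rewrite sumr_const card_ord.
Qed.

Lemma sqr_sum_le (R : realDomainType) N (x : 'I_N -> R) :
  (\sum_l x l) ^+ 2 <= N%:R * \sum_l x l ^+ 2.
Proof.
rewrite -(ler_pMn2r (ltn0Sn 1)).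
have -> : (\sum_l x l) ^+ 2 *+ 2 = \sum_l \sum_m x l * x m *+ 2.
  rewrite expr2 mulr_suml -sumrMnl; apply: eq_bigr => l _.
  by rewrite mulr_sumr -sumrMnl.
have -> : (N%:R * \sum_l x l ^+ 2) *+ 2 = \sum_l \sum_m (x l ^+ 2 + x m ^+ 2).
  under [RHS]eq_bigr do rewrite big_split /= sumr_const card_ord.
  by rewrite big_split /= sumr_const card_ord sumrMnl mulr_natl mulr2n.
by apply: ler_sum => l _; apply: ler_sum => m _; exact: (leif_mean_square_scaled _ _).1.
Qed.

Section Grid.
Variable R : realType.

Lemma summation_by_parts N (h : R) (u e : 'I_N -> R) :
  \sum_l u l * dh h e l = - \sum_l e l * Dh h u l.
Proof.
have shift : \sum_l u l * e (ord_pred l) = \sum_l u (ordS l) * e l.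
  by rewrite (reindex_inj (@ordS_inj N)); apply: eq_bigr => l _; rewrite ordSK.
rewrite /dh /Dh -sumrN.
transitivity ((\sum_l u l * e l - \sum_l u l * e (ord_pred l)) / h).
  by rewrite -sumrB mulr_suml; apply: eq_bigr => l _; ring.
rewrite shift -sumrB mulr_suml; apply: eq_bigr => l _; ring.
Qed.

Lemma LPhi_energy k N (h : R) (Phi : 'I_N -> 'M[R]_k) (f : 'I_k -> 'I_N -> R) :
  \sum_i \sum_l f i l * LPhi h Phi f i l =
  \sum_l \sum_i \sum_j Phi l i j * Dh h (f j) l * Dh h (f i) l.
Proof.
transitivity (\sum_i \sum_j \sum_l Phi l i j * Dh h (f j) l * Dh h (f i) l).
  apply: eq_bigr => i _; rewrite /LPhi.
  under eq_bigr => l _ do rewrite mulrN mulr_sumr.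
  rewrite sumrN exchange_big /= -sumrN; apply: eq_bigr => j _.
  by rewrite summation_by_parts opprK.
by under eq_bigr => i _ do rewrite exchange_big; rewrite exchange_big.
Qed.

Lemma LPhi_coercive k N (h : R) (Phi : 'I_N -> 'M[R]_k) (lam : R)
    (f : 'I_k -> 'I_N -> R) :
  (forall l, (Phi l)^T = Phi l) ->
  (forall l mu, eigenvalue (Phi l) mu -> lam <= mu) ->
  lam * \sum_i \sum_l Dh h (f i) l ^+ 2 <= \sum_i \sum_l f i l * LPhi h Phi f i l.
Proof.
move=> Phi_sym Phi_ge; rewrite LPhi_energy exchange_big mulr_sumr /=.
by apply: ler_sum => l _; apply: rayleigh_sum; [exact: Phi_sym | exact: Phi_ge].
Qed.

Lemma discrete_sobolev N (h : R) (u : 'I_N -> R) : 0 < h -> \sum_l u l = 0 ->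
  forall p, `|u p| ^+ 2 <= h * N%:R * (h * \sum_l Dh h u l ^+ 2).
Proof.
move=> h_gt0 u0 p.
have variationE : \sum_l `|u (ordS l) - u l| = h * \sum_l `|Dh h u l|.
  rewrite mulr_sumr; apply: eq_bigr => l _.
  by rewrite /Dh normrM normfV (gtr0_norm h_gt0) mulrCA divff ?mulr1 ?gt_eqF.
apply: (@le_trans _ _ ((h * \sum_l `|Dh h u l|) ^+ 2)).
  rewrite -variationE; apply: lerXn2r; last exact: norm_le_variation.
    by rewrite nnegrE.
  by rewrite nnegrE; apply: sumr_ge0.
have -> : h * N%:R * (h * \sum_l Dh h u l ^+ 2) =
    h ^+ 2 * (N%:R * \sum_l Dh h u l ^+ 2) by ring.
rewrite exprMn ler_wpM2l ?sqr_ge0 //.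
apply: le_trans (sqr_sum_le _) _.
by rewrite (eq_bigr (fun l => Dh h u l ^+ 2)) // => l _; rewrite real_normK ?num_real.
Qed.

Lemma Linf_ge0 k N (f : 'I_k -> 'I_N -> R) : 0 <= Linf f.
Proof. exact: bigmax_ge_id. Qed.

Lemma norm_le_Linf k N (f : 'I_k -> 'I_N -> R) i l : `|f i l| <= Linf f.
Proof.
apply: le_trans (le_bigmax _ _ i).
exact: (le_bigmax _ (fun l => `|f i l|) l).
Qed.

Lemma Linf_attained k N (f : 'I_k -> 'I_N -> R) :
  Linf f = 0 \/ exists i l, Linf f = `|f i l|.
Proof.
pose P x := x = 0 \/ exists i l, x = `|f i l|.
have maxP x y : P x -> P y -> P (Num.max x y) by rewrite /Num.max; case: ifP.
apply: (big_ind P); [by left | exact: maxP | move=> i _].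
by apply: (big_ind P); [left | exact: maxP | move=> l _; right; exists i, l].
Qed.

Lemma Linf_le_of_sqr_le k N (f : 'I_k -> 'I_N -> R) (c : R) : 0 <= c ->
  (forall i l, `|f i l| ^+ 2 <= c * Linf f) -> Linf f <= c.
Proof.
move=> c_ge0 sqr_le; have [-> // | [i [l Fil]]] := Linf_attained f.
have [F_le0 | F_gt0] := leP (Linf f) 0; first exact: le_trans F_le0 c_ge0.
by move: (sqr_le i l); rewrite -Fil expr2 ler_pM2r.
Qed.

Lemma sum_mul_le_Linf k N (f g : 'I_k -> 'I_N -> R) :
  \sum_i \sum_l f i l * g i l <= k%:R * N%:R * (Linf f * Linf g).
Proof.
apply: (@le_trans _ _ (\sum_(i < k) \sum_(l < N) Linf f * Linf g)).
  apply: ler_sum => i _; apply: ler_sum => l _.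
  apply: le_trans (ler_norm _) _; rewrite normrM.
  by apply: ler_pM; rewrite ?normr_ge0 ?norm_le_Linf.
by rewrite sumr_const sumr_const !card_ord -mulrnA -[X in X <= _]mulr_natl natrM (mulrC N%:R).
Qed.

Lemma Linf_le_LPhi k N (h : R) (Phi : 'I_N -> 'M[R]_k) (lam : R)
    (f : 'I_k -> 'I_N -> R) :
  0 < h -> 0 < lam -> (forall l, (Phi l)^T = Phi l) ->
  (forall l mu, eigenvalue (Phi l) mu -> lam <= mu) -> mean_zero f ->
  Linf f <= (h * N%:R) ^+ 2 * k%:R * Linf (LPhi h Phi f) / lam.
Proof.
move=> h_gt0 lam_gt0 Phi_sym Phi_ge f0.
set F := Linf f; set G := Linf (LPhi h Phi f).
set E := \sum_i \sum_l Dh h (f i) l ^+ 2.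
have E_le : E <= k%:R * N%:R * (F * G) / lam.
  rewrite ler_pdivlMr // mulrC.
  exact: le_trans (LPhi_coercive h f Phi_sym Phi_ge) (sum_mul_le_Linf _ _).
apply: Linf_le_of_sqr_le => [|i p].
  by rewrite divr_ge0 ?mulr_ge0 ?ler0n ?Linf_ge0 ?(ltW h_gt0) ?(ltW lam_gt0).
apply: le_trans (discrete_sobolev h_gt0 (f0 i) p) _.
have -> : (h * N%:R) ^+ 2 * k%:R * G / lam * Linf f =
    h * N%:R * (h * (k%:R * N%:R * (F * G) / lam)).
  by rewrite -/F; field; rewrite gt_eqF.
have hN_ge0 : 0 <= h * N%:R by rewrite mulr_ge0 ?ler0n ?(ltW h_gt0).
apply: (ler_wpM2l hN_ge0); apply: (ler_wpM2l (ltW h_gt0)); apply: le_trans E_le.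
rewrite /E (bigD1 i) //= lerDl.
by apply: sumr_ge0 => j _; apply: sumr_ge0 => l _; apply: sqr_ge0.
Qed.

End Grid.

Theorem lemma3p2 (R : realType) (n : nat) (L : R) :
  (2 <= n)%N -> 0 < L ->
  exists C : R, 0 < C /\
  forall N : nat, (1 <= N)%N ->
  let h := L / N%:R in
  forall (Phi : 'I_N -> 'M[R]_(n.-1)) (lam M : R)
         (phi f : 'I_(n.-1) -> 'I_N -> R),
    (forall l : 'I_N, sym_posdef (Phi l)) ->
    is_min_eigenvalue Phi lam ->
    0 < lam ->
    mean_zero phi ->
    Linf phi <= M ->
    mean_zero f ->
    LPhi h Phi f = phi ->
    Linf f <= C * M / lam * (Num.sqrt h)^-1 * Num.sqrt (n.-1)%:R.
Proof.
move=> n_ge2 L_gt0.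
have k_gt0 : (0 < n.-1)%N by rewrite -subn1 subn_gt0.
set k := n.-1 in k_gt0 *.
exists (L ^+ 2 * Num.sqrt L * Num.sqrt k%:R); split.
  by rewrite !mulr_gt0 ?exprn_gt0 ?sqrtr_gt0 ?ltr0n.
move=> N N_gt0 h Phi lam M phi f Phi_spd [_ lam_min] lam_gt0 _ phi_le_M f0 Lf.
have h_gt0 : 0 < h by rewrite divr_gt0 ?ltr0n.
have hN : h * N%:R = L by rewrite divfK ?pnatr_eq0 -?lt0n.
have Phi_sym l : (Phi l)^T = Phi l by case: (Phi_spd l).
apply: le_trans (Linf_le_LPhi h_gt0 lam_gt0 Phi_sym lam_min f0) _.
have sqrt_kK : Num.sqrt k%:R * Num.sqrt k%:R = k%:R :> R by rewrite -expr2 sqr_sqrtr.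
have -> : L ^+ 2 * Num.sqrt L * Num.sqrt k%:R * M / lam * (Num.sqrt h)^-1 * Num.sqrt k%:R
    = L ^+ 2 * k%:R * M / lam * (Num.sqrt L / Num.sqrt h).
  by rewrite -[in RHS]sqrt_kK; field; rewrite !gt_eqF ?sqrtr_gt0.
have sqrt_ratio_ge1 : 1 <= Num.sqrt L / Num.sqrt h.
  rewrite ler_pdivlMr ?sqrtr_gt0 // mul1r ler_sqrt ?(ltW L_gt0) //.
  by rewrite -hN ler_peMr ?(ltW h_gt0) ?ler1n.
rewrite hN Lf; apply: le_trans (ler_peMr _ sqrt_ratio_ge1).
  by rewrite ler_pM2r ?invr_gt0 // ler_pM2l ?mulr_gt0 ?exprn_gt0 ?ltr0n.
by rewrite divr_ge0 ?mulr_ge0 ?ler0n ?(ltW L_gt0) ?(ltW lam_gt0) ?(le_trans (Linf_ge0 phi)).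
Qed.
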